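(* Let $0<\epsilon\le \mathrm{e}^{-2}$, set $a=2\sqrt{\log(1/\epsilon)}$, and define \[ \phi(p)=\frac{\operatorname{erf}(ap)+1}{2},\qquad \psi(p)=\phi(p)\,\mathrm{e}^{-p},\qquad p\in\mathbb{R}. \] Then: (i) $0<\psi(p)\le \mathrm{e}^{-|p|}$ for all $p\in\mathbb{R}$ (exponential decay on $\mathbb{R}$); (ii) $|\psi(p)-\mathrm{e}^{-p}|\le\epsilon$ for all $p\ge 1/2$; (iii) there is a constant $C>0$, independent of $\epsilon$ and $r$, such that for every integer $r$ with $\tfrac12\log(1/\epsilon)\le r\le\log(1/\epsilon)$, \[ \|\psi^{(r)}\|_{L^2(\mathbb{R})}^{1/r}\le C\, r . \]
   Context: $\operatorname{erf}(p)=\frac{2}{\sqrt{\pi}}\int_0^p \mathrm{e}^{-t^2}\,\mathrm{d}t$ is the error function; $\log$ is the natural logarithm; $\psi^{(r)}$ is the $r$-th derivative of $\psi$. *)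

From Stdlib Require Import Reals.
From Coquelicot Require Import Coquelicot.
Open Scope R_scope.

Definition erf (p : R) : R :=
  2 / sqrt PI * RInt (fun t => exp (- t ^ 2)) 0 p.

Definition a_eps (eps : R) : R := 2 * sqrt (ln (/ eps)).

Definition phi (eps p : R) : R := (erf (a_eps eps * p) + 1) / 2.

Definition psi (eps p : R) : R := phi eps p * exp (- p).

Definition L2_norm_is (f : R -> R) (n : R) : Prop :=
  exists I : R,
    is_RInt_gen (fun p => (f p) ^ 2) (Rbar_locally m_infty) (Rbar_locally p_infty) I
    /\ n = sqrt I.

(** With [L = ln (1/eps)] we have [a^2 = 4 L], and the Gaussian tail bound
    [1 - erf x <= exp (- x^2)] (from [(int_0^x e^(-t^2))^2 + J(x) = PI/4] with
    [0 < J(x) <= PI/4 e^(-x^2)]) gives (i) and (ii) at once.  For (iii), induction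
    shows [psi^(r) = (-1)^r psi + Q_r(p) e^(-(a p)^2 - p)] for a polynomial [Q_r];
    its coefficients are dominated by those of [(a/sqrt PI) (6 r + 2 a^2 X)^r]
    as soon as [L/2 <= r <= L], so [|psi^(r)(p)| (1 + p^2) <= 6 (66 r)^r], and
    integrating against [1/(1 + p^2)] bounds the L2 norm by [(792 r)^r]. *)

From Stdlib Require Import Reals Lra Lia FunctionalExtensionality Classical.
From Coquelicot Require Import Coquelicot.
Open Scope R_scope.

(* Coquelicot states many equalities in a normed-module carrier convertible to [R];
   [ring] and [field] need them restated at type [R]. *)
Ltac eq_at_R := match goal with |- @eq _ ?x ?y => change (@eq R x y) end.

Lemma continuous_of_ex_derive (f : R -> R) (x : R) : ex_derive f x -> continuous f x.
Proof. apply (ex_derive_continuous (K := R_AbsRing) (V := R_NormedModule)). Qed.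

Lemma ex_RInt_of_continuous (f : R -> R) (a b : R) :
  (forall z, continuous f z) -> ex_RInt f a b.
Proof. intros Hf; apply (ex_RInt_continuous (V := R_CompleteNormedModule)); auto. Qed.

Lemma scal_R (k x : R) : scal k x = k * x.
Proof. reflexivity. Qed.

Lemma is_derive_eq_l (f : R -> R) (x l l' : R) : is_derive f x l' -> l' = l -> is_derive f x l.
Proof. now intros H <-. Qed.

Lemma one_plus_sq_pos (x : R) : 0 < 1 + x ^ 2.
Proof. generalize (pow2_ge_0 x); lra. Qed.

Lemma exp_le_compat (x y : R) : x <= y -> exp x <= exp y.
Proof. intros [H | ->]; [left; now apply exp_increasing | lra]. Qed.

Lemma exp_mul_INR (n : nat) (x : R) : exp (INR n * x) = exp x ^ n.
Proof.
  induction n as [| n IH]; [simpl; now rewrite Rmult_0_l, exp_0 |].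
  rewrite S_INR, Rmult_plus_distr_r, Rmult_1_l, exp_plus, IH; simpl; ring.
Qed.

Lemma exp_one_eighth_lt_2 : exp (1 / 8) < 2.
Proof.
  destruct (Rlt_or_le (exp (1 / 8)) 2) as [H | H]; auto.
  assert (H8 : 2 ^ 8 <= exp (1 / 8) ^ 8) by (apply pow_incr; lra).
  rewrite <- exp_mul_INR in H8; replace (INR 8 * (1 / 8)) with 1 in H8 by (simpl; field).
  generalize exp_le_3; simpl in H8; lra.
Qed.

Lemma is_RInt_inv_one_plus_sq (x y : R) :
  is_RInt (fun t => / (1 + t ^ 2)) x y (atan y - atan x).
Proof.
  apply (is_RInt_derive (V := R_CompleteNormedModule) atan).
  - intros t _; apply is_derive_Reals, derivable_pt_lim_atan.
  - intros t _; apply continuous_of_ex_derive; auto_derive.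
    generalize (one_plus_sq_pos t); lra.
Qed.

Lemma RInt_inv_one_plus_sq_0_1 : RInt (fun t => / (1 + t ^ 2)) 0 1 = PI / 4.
Proof.
  rewrite (is_RInt_unique _ _ _ _ (is_RInt_inv_one_plus_sq 0 1)), atan_1, atan_0.
  eq_at_R; ring.
Qed.

(** * The Gaussian integral and the error function *)

Definition gauss (t : R) : R := exp (- t ^ 2).
Definition gauss_int (x : R) : R := RInt gauss 0 x.
Definition gauss_J_integrand (x t : R) : R := exp (- (x ^ 2 * (1 + t ^ 2))) / (1 + t ^ 2).
Definition gauss_J (x : R) : R := RInt (gauss_J_integrand x) 0 1.

Lemma continuous_gauss (x : R) : continuous gauss x.
Proof. apply continuous_of_ex_derive; unfold gauss; auto_derive; auto. Qed.

Lemma continuous_gauss_J_integrand (x t : R) : continuous (gauss_J_integrand x) t.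
Proof.
  apply continuous_of_ex_derive; unfold gauss_J_integrand; auto_derive.
  generalize (one_plus_sq_pos t); lra.
Qed.

Lemma is_derive_gauss_int (x : R) : is_derive gauss_int x (gauss x).
Proof.
  apply is_derive_RInt with 0; [| apply continuous_gauss].
  apply filter_forall. intros y.
  apply (RInt_correct (V := R_CompleteNormedModule)), ex_RInt_of_continuous, continuous_gauss.
Qed.

Lemma Derive_gauss_J_integrand (x t : R) :
  Derive (fun u => gauss_J_integrand u t) x = -2 * x * exp (- (x ^ 2 * (1 + t ^ 2))).
Proof.
  assert (Ht := one_plus_sq_pos t).
  apply is_derive_unique; unfold gauss_J_integrand; auto_derive; [lra |].
  replace (x * (x * 1) * (1 + t * (t * 1))) with (x ^ 2 * (1 + t ^ 2)) by ring.
  field; lra.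
Qed.

(* Substituting [s = x t] turns the differentiated integrand into
   [-2 e^(-x^2) x e^(-(x t)^2)]. *)
Lemma RInt_Derive_gauss_J_integrand (x : R) :
  RInt (fun t => Derive (fun u => gauss_J_integrand u t) x) 0 1 = -2 * gauss x * gauss_int x.
Proof.
  rewrite (RInt_ext _ (fun t => scal (-2 * gauss x) (scal x (gauss (x * t + 0))))).
  2:{ intros t _; rewrite Derive_gauss_J_integrand, (scal_R x), (scal_R (-2 * gauss x)).
      unfold gauss.
      replace (- (x * t + 0) ^ 2) with (- (x ^ 2 * (1 + t ^ 2)) + x ^ 2) by ring.
      rewrite exp_plus.
      assert (Hx : exp (- x ^ 2) * exp (x ^ 2) = 1)
        by (rewrite <- exp_plus, Rplus_opp_l; apply exp_0).
      set (E := exp (- (x ^ 2 * (1 + t ^ 2)))).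
      replace (-2 * exp (- x ^ 2) * (x * (E * exp (x ^ 2))))
        with (-2 * x * E * (exp (- x ^ 2) * exp (x ^ 2))) by ring.
      now rewrite Hx, Rmult_1_r. }
  rewrite (RInt_scal (V := R_CompleteNormedModule)).
  2:{ apply (ex_RInt_ext (fun t => x * gauss (x * t + 0))); [reflexivity |].
      apply ex_RInt_of_continuous; intros t; apply continuous_of_ex_derive.
      unfold gauss; auto_derive; auto. }
  rewrite (RInt_comp_lin (V := R_CompleteNormedModule)).
  2: apply ex_RInt_of_continuous, continuous_gauss.
  replace (x * 0 + 0) with 0 by ring; replace (x * 1 + 0) with x by ring; reflexivity.
Qed.

Lemma is_derive_gauss_J (x : R) : is_derive gauss_J x (-2 * gauss x * gauss_int x).
Proof.
  unfold gauss_J; rewrite <- RInt_Derive_gauss_J_integrand.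
  apply (is_derive_RInt_param gauss_J_integrand 0 1 x).
  - apply filter_forall; intros u t _; unfold gauss_J_integrand; auto_derive.
    generalize (one_plus_sq_pos t); lra.
  - intros t _.
    apply continuity_2d_pt_ext with (fun u v => -2 * u * exp (- (u ^ 2 * (1 + v ^ 2)))).
    { intros; symmetry; apply Derive_gauss_J_integrand. }
    apply continuity_2d_pt_mult.
    + apply continuity_2d_pt_mult; [apply continuity_2d_pt_const | apply continuity_2d_pt_id1].
    + apply continuity_1d_2d_pt_comp with (f := exp) (g := fun u v => - (u ^ 2 * (1 + v ^ 2))).
      * apply derivable_continuous_pt, derivable_pt_exp.
      * repeat first [ apply continuity_2d_pt_opp | apply continuity_2d_pt_mult
                     | apply continuity_2d_pt_plus | apply continuity_2d_pt_id1
                     | apply continuity_2d_pt_id2 | apply continuity_2d_pt_const ].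
  - apply filter_forall; intros u; apply ex_RInt_of_continuous, continuous_gauss_J_integrand.
Qed.

(* The sum has zero derivative and equals [int_0^1 1/(1+t^2) = atan 1] at [x = 0];
   this is the classical evaluation of the Gaussian integral. *)
Lemma gauss_int_sq_add_J (x : R) : gauss_int x ^ 2 + gauss_J x = PI / 4.
Proof.
  set (h := fun y => gauss_int y ^ 2 + gauss_J y).
  assert (Hh : forall y, is_derive h y 0).
  { intros y; eapply is_derive_eq_l.
    - apply (is_derive_plus (K := R_AbsRing) (V := R_NormedModule)).
      + apply (is_derive_pow gauss_int 2 y (gauss y)), is_derive_gauss_int.
      + apply is_derive_gauss_J.
    - unfold plus; simpl; ring. }
  assert (H0 : h 0 = PI / 4).
  { unfold h, gauss_int, gauss_J; rewrite RInt_point, <- RInt_inv_one_plus_sq_0_1.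
    unfold zero; simpl; rewrite Rmult_0_l, Rplus_0_l.
    apply RInt_ext; intros t _; unfold gauss_J_integrand.
    replace (- (0 ^ 2 * (1 + t ^ 2))) with 0 by ring; rewrite exp_0.
    unfold Rdiv; now rewrite Rmult_1_l. }
  change (h x = PI / 4); rewrite <- H0.
  destruct (Rle_or_lt x 0) as [Hx | Hx].
  - destruct Hx as [Hx | ->]; [| reflexivity].
    apply eq_is_derive; auto; intros; apply Hh.
  - symmetry; apply eq_is_derive; auto; intros; apply Hh.
Qed.

Lemma gauss_J_pos (x : R) : 0 < gauss_J x.
Proof.
  unfold gauss_J.
  apply Rlt_le_trans with (RInt (fun _ => exp (- (x ^ 2 * 2)) / 2) 0 1).
  { rewrite RInt_const, scal_R.
    generalize (exp_pos (- (x ^ 2 * 2))); lra. }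
  apply RInt_le; [lra | apply ex_RInt_const | |].
  { apply ex_RInt_of_continuous, continuous_gauss_J_integrand. }
  intros t Ht; unfold gauss_J_integrand.
  assert (0 <= t ^ 2 <= 1) by (split; [apply pow2_ge_0 | nra]).
  assert (exp (- (x ^ 2 * 2)) <= exp (- (x ^ 2 * (1 + t ^ 2)))).
  { apply exp_le_compat; generalize (pow2_ge_0 x); nra. }
  generalize (exp_pos (- (x ^ 2 * 2))); intros.
  unfold Rdiv; apply Rmult_le_compat; try lra; apply Rinv_le_contravar; lra.
Qed.

Lemma gauss_J_le (x : R) : gauss_J x <= PI / 4 * exp (- x ^ 2).
Proof.
  rewrite <- RInt_inv_one_plus_sq_0_1, Rmult_comm.
  rewrite <- (RInt_scal (V := R_CompleteNormedModule)).
  2: apply ex_RInt_of_continuous; intros t; apply continuous_of_ex_derive; auto_derive;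
     generalize (one_plus_sq_pos t); lra.
  unfold gauss_J; apply RInt_le; [lra | | |].
  { apply ex_RInt_of_continuous, continuous_gauss_J_integrand. }
  { apply (ex_RInt_ext (fun t => exp (- x ^ 2) * / (1 + t ^ 2))); [reflexivity |].
    apply ex_RInt_of_continuous; intros t; apply continuous_of_ex_derive; auto_derive.
    generalize (one_plus_sq_pos t); lra. }
  intros t _; rewrite scal_R; unfold gauss_J_integrand.
  assert (Ht := one_plus_sq_pos t).
  assert (exp (- (x ^ 2 * (1 + t ^ 2))) <= exp (- x ^ 2)).
  { apply exp_le_compat; generalize (pow2_ge_0 x) (pow2_ge_0 t); nra. }
  unfold Rdiv; apply Rmult_le_compat_r; auto; left; apply Rinv_0_lt_compat; lra.
Qed.

Lemma gauss_int_nonneg (x : R) : 0 <= x -> 0 <= gauss_int x.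
Proof.
  intros Hx; apply RInt_ge_0; auto; [apply ex_RInt_of_continuous, continuous_gauss |].
  intros; left; apply exp_pos.
Qed.

Lemma gauss_int_nonpos (x : R) : x <= 0 -> gauss_int x <= 0.
Proof.
  intros Hx; unfold gauss_int.
  rewrite <- opp_RInt_swap by apply ex_RInt_of_continuous, continuous_gauss.
  assert (0 <= RInt gauss x 0).
  { apply RInt_ge_0; auto; [apply ex_RInt_of_continuous, continuous_gauss |].
    intros; left; apply exp_pos. }
  unfold opp; simpl; lra.
Qed.

Lemma erf_sq (x : R) : erf x ^ 2 = 1 - 4 / PI * gauss_J x.
Proof.
  change (erf x) with (2 / sqrt PI * gauss_int x).
  assert (HPI := PI_RGT_0).
  assert (Hs : sqrt PI ^ 2 = PI) by (simpl; rewrite Rmult_1_r; apply sqrt_sqrt; lra).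
  assert (0 < sqrt PI) by (apply sqrt_lt_R0; lra).
  replace (gauss_J x) with (PI / 4 - gauss_int x ^ 2)
    by (generalize (gauss_int_sq_add_J x); lra).
  rewrite Rpow_mult_distr; unfold Rdiv; rewrite Rpow_mult_distr, pow_inv, Hs.
  field; lra.
Qed.

Lemma erf_sq_lt_1 (x : R) : erf x ^ 2 < 1.
Proof.
  rewrite erf_sq; generalize (gauss_J_pos x) PI_RGT_0; intros.
  assert (0 < 4 / PI * gauss_J x) by (apply Rmult_lt_0_compat; auto; apply Rdiv_lt_0_compat; lra).
  lra.
Qed.

Lemma erf_sq_ge (x : R) : 1 - exp (- x ^ 2) <= erf x ^ 2.
Proof.
  rewrite erf_sq; generalize (gauss_J_le x) PI_RGT_0; intros.
  assert (4 / PI * gauss_J x <= exp (- x ^ 2)).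
  { apply Rmult_le_reg_l with (PI / 4); [lra |].
    replace (PI / 4 * (4 / PI * gauss_J x)) with (gauss_J x) by (field; lra); lra. }
  lra.
Qed.

Lemma erf_nonneg (x : R) : 0 <= x -> 0 <= erf x.
Proof.
  intros Hx; apply Rmult_le_pos; [| now apply gauss_int_nonneg].
  apply Rdiv_le_0_compat; [lra | apply sqrt_lt_R0, PI_RGT_0].
Qed.

Lemma erf_nonpos (x : R) : x <= 0 -> erf x <= 0.
Proof.
  intros Hx; change (erf x) with (2 / sqrt PI * gauss_int x).
  assert (0 < 2 / sqrt PI) by (apply Rdiv_lt_0_compat; [lra | apply sqrt_lt_R0, PI_RGT_0]).
  generalize (gauss_int_nonpos x Hx); nra.
Qed.

Lemma erf_bounds (x : R) : -1 < erf x < 1.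
Proof. generalize (erf_sq_lt_1 x); intros; split; nra. Qed.

Lemma erf_tail_nonneg (x : R) : 0 <= x -> 1 - erf x <= exp (- x ^ 2).
Proof. intros Hx; generalize (erf_sq_ge x) (erf_nonneg x Hx) (erf_bounds x); intros; nra. Qed.

Lemma erf_tail_nonpos (x : R) : x <= 0 -> 1 + erf x <= exp (- x ^ 2).
Proof. intros Hx; generalize (erf_sq_ge x) (erf_nonpos x Hx) (erf_bounds x); intros; nra. Qed.

(** * Pointwise bounds on [psi] *)

Lemma ln_inv_ge_2 (eps : R) : 0 < eps <= exp (-2) -> 2 <= ln (/ eps).
Proof.
  intros [H0 H2].
  assert (exp 2 <= / eps).
  { replace (exp 2) with (/ exp (-2)) by (rewrite <- exp_Ropp; f_equal; ring).
    apply Rinv_le_contravar; auto. }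
  rewrite <- (ln_exp 2); apply ln_le; [apply exp_pos | auto].
Qed.

Lemma exp_neg_ln_inv (eps : R) : 0 < eps -> exp (- ln (/ eps)) = eps.
Proof. intros H; rewrite exp_Ropp, exp_ln by (apply Rinv_0_lt_compat; auto); apply Rinv_inv. Qed.

Lemma a_eps_nonneg (eps : R) : 0 <= a_eps eps.
Proof. unfold a_eps; generalize (sqrt_pos (ln (/ eps))); lra. Qed.

Lemma a_eps_sq (eps : R) : 0 <= ln (/ eps) -> a_eps eps ^ 2 = 4 * ln (/ eps).
Proof. intros H; unfold a_eps; rewrite Rpow_mult_distr, pow2_sqrt; auto; ring. Qed.

Lemma phi_bounds (eps p : R) : 0 < phi eps p < 1.
Proof. unfold phi; generalize (erf_bounds (a_eps eps * p)); lra. Qed.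

Lemma phi_le_of_nonpos (eps p : R) : p <= 0 -> phi eps p <= exp (- (a_eps eps * p) ^ 2) / 2.
Proof.
  intros Hp; unfold phi; generalize (a_eps_nonneg eps); intros.
  generalize (erf_tail_nonpos (a_eps eps * p) ltac:(nra)); lra.
Qed.

Lemma one_sub_phi_le_of_nonneg (eps p : R) :
  0 <= p -> 1 - phi eps p <= exp (- (a_eps eps * p) ^ 2) / 2.
Proof.
  intros Hp; unfold phi; generalize (a_eps_nonneg eps); intros.
  generalize (erf_tail_nonneg (a_eps eps * p) ltac:(nra)); lra.
Qed.

Definition gauss_exp (a p : R) : R := exp (- (a * p) ^ 2 - p).

Lemma psi_le_gauss_exp_of_nonpos (eps p : R) : p <= 0 -> psi eps p <= gauss_exp (a_eps eps) p / 2.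
Proof.
  intros Hp; unfold psi, gauss_exp; unfold Rminus; rewrite exp_plus.
  generalize (phi_le_of_nonpos eps p Hp) (exp_pos (- p)); intros; nra.
Qed.

Lemma psi_pos_le_exp_abs (eps : R) : 0 < eps <= exp (-2) ->
  forall p, 0 < psi eps p <= exp (- Rabs p).
Proof.
  intros He p; unfold psi at 1; generalize (phi_bounds eps p) (exp_pos (- p)); intros.
  split; [nra |].
  destruct (Rle_or_lt 0 p) as [Hp | Hp].
  - rewrite Rabs_pos_eq by auto; unfold psi; nra.
  - rewrite Rabs_left, Ropp_involutive by auto.
    assert (Ha : 8 <= a_eps eps ^ 2)
      by (rewrite a_eps_sq; generalize (ln_inv_ge_2 eps He); lra).
    (* [-(a p)^2 - p <= p + 1/8] once [a^2 >= 8], by completing the square. *)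
    assert (gauss_exp (a_eps eps) p <= exp (1 / 8) * exp p).
    { unfold gauss_exp; rewrite <- exp_plus; apply exp_le_compat.
      rewrite Rpow_mult_distr; generalize (pow2_ge_0 (p + 1 / 8)); nra. }
    generalize (psi_le_gauss_exp_of_nonpos eps p (Rlt_le _ _ Hp)) exp_one_eighth_lt_2 (exp_pos p).
    nra.
Qed.

Lemma psi_sub_exp_abs_le (eps : R) : 0 < eps <= exp (-2) ->
  forall p, 1 / 2 <= p -> Rabs (psi eps p - exp (- p)) <= eps.
Proof.
  intros He p Hp; generalize (phi_bounds eps p) (one_sub_phi_le_of_nonneg eps p ltac:(lra)).
  intros Hphi Htail; assert (HL := ln_inv_ge_2 eps He).
  assert (0 < exp (- p) <= 1)
    by (split; [apply exp_pos | rewrite <- exp_0; apply exp_le_compat; lra]).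
  assert (exp (- (a_eps eps * p) ^ 2) <= eps).
  { rewrite Rpow_mult_distr, a_eps_sq by lra.
    rewrite <- (exp_neg_ln_inv eps (proj1 He)) at 2; apply exp_le_compat.
    assert (1 / 4 <= p ^ 2) by nra; nra. }
  unfold psi; rewrite Rabs_left1 by nra.
  generalize (exp_pos (- (a_eps eps * p) ^ 2)); nra.
Qed.

(** * The derivatives of [psi] *)

Definition phi_slope (a : R) : R := a / sqrt PI.

Lemma phi_slope_nonneg (a : R) : 0 <= a -> 0 <= phi_slope a.
Proof. intros; apply Rdiv_le_0_compat; auto; apply sqrt_lt_R0, PI_RGT_0. Qed.

Lemma is_derive_gauss_exp (a p : R) :
  is_derive (gauss_exp a) p ((- (2 * a ^ 2 * p) - 1) * gauss_exp a p).
Proof.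
  unfold gauss_exp; auto_derive; auto.
  replace (- (a * p * (a * p * 1)) + - p) with (- (a * p) ^ 2 - p) by ring; ring.
Qed.

Lemma is_derive_psi (eps p : R) :
  is_derive (psi eps) p (phi_slope (a_eps eps) * gauss_exp (a_eps eps) p - psi eps p).
Proof.
  set (a := a_eps eps).
  assert (HPI : sqrt PI <> 0) by apply Rgt_not_eq, sqrt_lt_R0, PI_RGT_0.
  assert (Hphi : is_derive (phi eps) p (phi_slope a * gauss (a * p))).
  { apply (is_derive_ext (fun q => / sqrt PI * gauss_int (a * q) + / 2)).
    { intros q; unfold phi, erf; fold a; change (RInt _ 0 (a * q)) with (gauss_int (a * q)).
      eq_at_R; field; auto. }
    eapply is_derive_eq_l.
    - apply (is_derive_plus (K := R_AbsRing) (V := R_NormedModule)); [| apply is_derive_const].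
      apply (is_derive_scal (fun q => gauss_int (a * q))).
      apply (is_derive_comp gauss_int (fun q => a * q)); [apply is_derive_gauss_int |].
      apply (is_derive_scal (fun q => q)), (is_derive_id (K := R_AbsRing)).
    - unfold phi_slope, plus, scal, zero; simpl; unfold mult, one; simpl; field; auto. }
  unfold psi at 1; eapply is_derive_eq_l.
  - apply (is_derive_mult (phi eps) (fun q => exp (- q)));
      [apply Hphi | | intros; apply Rmult_comm].
    auto_derive; auto; reflexivity.
  - unfold psi, gauss_exp, gauss, plus, mult; simpl; fold a; unfold Rminus; rewrite exp_plus; ring.
Qed.

Definition seq_shift (c : nat -> R) (j : nat) : R :=
  match j with O => 0 | S j' => c j' end.

Definition seq_delta0 (k : R) (j : nat) : R :=
  match j with O => k | S _ => 0 end.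

Lemma sum_scal_l (A : nat -> R) (x : R) (N : nat) :
  sum_f_R0 (fun i => x * A i) N = x * sum_f_R0 A N.
Proof. rewrite scal_sum; apply sum_eq; intros; ring. Qed.

Lemma sum_seq_shift_pow (c : nat -> R) (N : nat) (p : R) :
  sum_f_R0 (fun j => seq_shift c j * p ^ j) (S N) = p * sum_f_R0 (fun j => c j * p ^ j) N.
Proof. induction N as [| N IH]; [simpl; ring |]; rewrite tech5, IH; simpl; ring. Qed.

Lemma sum_seq_delta0_pow (k : R) (N : nat) (p : R) :
  sum_f_R0 (fun j => seq_delta0 k j * p ^ j) N = k.
Proof. induction N as [| N IH]; [simpl; ring |]; rewrite tech5, IH; simpl; ring. Qed.

Lemma is_derive_sum_pow (c : nat -> R) (N : nat) (p : R) :
  is_derive (fun p => sum_f_R0 (fun j => c j * p ^ j) (S N)) p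
            (sum_f_R0 (fun j => INR (S j) * c (S j) * p ^ j) N).
Proof.
  induction N as [| N IH]; [simpl; auto_derive; auto; ring |].
  eapply is_derive_eq_l.
  - apply (is_derive_plus (K := R_AbsRing) (V := R_NormedModule)
             (fun p => sum_f_R0 (fun j => c j * p ^ j) (S N))
             (fun p => c (S (S N)) * p ^ (S (S N)))); [apply IH |].
    apply (is_derive_scal (fun p => p ^ (S (S N)))).
    apply (is_derive_pow (fun p => p) (S (S N)) p 1), (is_derive_id (K := R_AbsRing)).
  - rewrite tech5; unfold plus, scal; simpl; unfold mult; simpl; eq_at_R; ring.
Qed.

(* [psi^(r) = (-1)^r psi + Q_r gauss_exp a]; differentiating gives
   [Q_(r+1) = Q_r' - (2 a^2 p + 1) Q_r + (-1)^r phi_slope a], read off coefficientwise. *)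
Fixpoint qcoef (a : R) (r : nat) : nat -> R :=
  match r with
  | O => fun _ => 0
  | S r' => fun j => INR (S j) * qcoef a r' (S j) - 2 * a ^ 2 * seq_shift (qcoef a r') j
                     - qcoef a r' j + seq_delta0 ((-1) ^ r' * phi_slope a) j
  end.

Definition qpoly (a : R) (r : nat) (p : R) : R := sum_f_R0 (fun j => qcoef a r j * p ^ j) r.

Definition qpoly_deriv (a : R) (r : nat) (p : R) : R :=
  sum_f_R0 (fun j => INR (S j) * qcoef a r (S j) * p ^ j) r.

Definition dpsi (eps : R) (r : nat) (p : R) : R :=
  (-1) ^ r * psi eps p + qpoly (a_eps eps) r p * gauss_exp (a_eps eps) p.

Lemma qcoef_S (a : R) (r j : nat) :
  qcoef a (S r) j = INR (S j) * qcoef a r (S j) - 2 * a ^ 2 * seq_shift (qcoef a r) j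
                    - qcoef a r j + seq_delta0 ((-1) ^ r * phi_slope a) j.
Proof. reflexivity. Qed.

Lemma qcoef_high (a : R) (r j : nat) : (r <= j)%nat -> qcoef a r j = 0.
Proof.
  revert j; induction r as [| r IH]; intros j Hj; [reflexivity |].
  destruct j as [| j]; [lia |]; rewrite qcoef_S, !IH by lia; simpl; rewrite IH by lia; ring.
Qed.

Lemma is_derive_qpoly (a : R) (r : nat) (p : R) : is_derive (qpoly a r) p (qpoly_deriv a r p).
Proof.
  destruct r as [| r]; [unfold qpoly, qpoly_deriv; simpl; auto_derive; auto; ring |].
  eapply is_derive_eq_l; [apply is_derive_sum_pow |].
  unfold qpoly_deriv; rewrite tech5, (qcoef_high a (S r) (S (S r))) by lia; ring.
Qed.

Lemma qpoly_S (a : R) (r : nat) (p : R) :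
  qpoly a (S r) p = qpoly_deriv a r p - (2 * a ^ 2 * p + 1) * qpoly a r p + (-1) ^ r * phi_slope a.
Proof.
  unfold qpoly at 1.
  rewrite (sum_eq _ (fun j => ((INR (S j) * qcoef a r (S j) * p ^ j
             - 2 * a ^ 2 * (seq_shift (qcoef a r) j * p ^ j)) - qcoef a r j * p ^ j)
             + seq_delta0 ((-1) ^ r * phi_slope a) j * p ^ j))
    by (intros; rewrite qcoef_S; ring).
  rewrite plus_sum, !minus_sum, sum_scal_l, sum_seq_shift_pow, sum_seq_delta0_pow, tech5.
  rewrite (qcoef_high a r (S (S r))), tech5, (qcoef_high a r (S r)) by lia.
  unfold qpoly_deriv, qpoly; ring.
Qed.

Lemma is_derive_dpsi (eps : R) (r : nat) (p : R) : is_derive (dpsi eps r) p (dpsi eps (S r) p).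
Proof.
  unfold dpsi; set (a := a_eps eps); eapply is_derive_eq_l.
  - apply (is_derive_plus (K := R_AbsRing) (V := R_NormedModule)).
    + apply (is_derive_scal (psi eps)), is_derive_psi.
    + apply (is_derive_mult (qpoly a r) (gauss_exp a));
        [apply is_derive_qpoly | apply is_derive_gauss_exp | intros; apply Rmult_comm].
  - rewrite qpoly_S; fold a; unfold plus, scal, mult; simpl; unfold mult; simpl; eq_at_R; ring.
Qed.

Lemma Derive_n_psi (eps : R) (r : nat) : Derive_n (psi eps) r = dpsi eps r.
Proof.
  induction r as [| r IH]; apply functional_extensionality; intros p.
  - unfold dpsi, qpoly; simpl; ring.
  - simpl; rewrite IH; apply is_derive_unique, is_derive_dpsi.
Qed.

(** * A majorant for the coefficients of [Q_r] *)

Fixpoint mcoef (b u v : R) (k : nat) : nat -> R :=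
  match k with
  | O => seq_delta0 b
  | S k' => fun j => u * mcoef b u v k' j + v * seq_shift (mcoef b u v k') j
  end.

Lemma sum_mcoef_pow (b u v x : R) (k : nat) :
  sum_f_R0 (fun j => mcoef b u v k j * x ^ j) k = b * (u + v * x) ^ k.
Proof.
  induction k as [| k IH]; [simpl; ring |].
  rewrite (sum_eq _ (fun j => u * (mcoef b u v k j * x ^ j)
                               + v * (seq_shift (mcoef b u v k) j * x ^ j)))
    by (intros; simpl; ring).
  rewrite plus_sum, !sum_scal_l, sum_seq_shift_pow, tech5.
  assert (Hk : forall k j, (k < j)%nat -> mcoef b u v k j = 0).
  { clear; induction k as [| k IH]; intros [| j] Hj; try lia; simpl; [reflexivity |].
    rewrite !IH by lia; ring. }
  rewrite Hk, IH by lia; simpl; ring.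
Qed.

Section Majorant.

Variables b u v : R.
Hypotheses (Hb : 0 <= b) (Hu : 1 <= u) (Hv : 0 <= v).

Lemma mcoef_nonneg (k j : nat) : 0 <= mcoef b u v k j.
Proof.
  revert j; induction k as [| k IH]; intros [| j]; simpl; try lra.
  - generalize (IH 0%nat); nra.
  - generalize (IH (S j)) (IH j); nra.
Qed.

Lemma mcoef_0_ge (k : nat) : b <= mcoef b u v k 0.
Proof.
  induction k as [| k IH]; simpl; [lra |].
  rewrite Rmult_0_r, Rplus_0_r; generalize (mcoef_nonneg k 0); nra.
Qed.

(* [mcoef b u v k j = b C(k,j) u^(k-j) v^j], and [(j+1) C(k,j+1) = (k-j) C(k,j)]. *)
Lemma mcoef_ratio (k j : nat) :
  INR (S j) * u * mcoef b u v k (S j) <= INR k * v * mcoef b u v k j.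
Proof.
  revert j; induction k as [| k IH]; intros j; [destruct j; simpl; lra |].
  change (mcoef b u v (S k) (S j)) with (u * mcoef b u v k (S j) + v * mcoef b u v k j).
  change (mcoef b u v (S k) j) with (u * mcoef b u v k j + v * seq_shift (mcoef b u v k) j).
  assert (Hshift : INR j * u * mcoef b u v k j <= INR k * v * seq_shift (mcoef b u v k) j).
  { destruct j as [| j]; [simpl | apply IH].
    generalize (mcoef_nonneg k 0) (pos_INR k); intros; nra. }
  assert (0 <= seq_shift (mcoef b u v k) j) by (destruct j; simpl; [lra | apply mcoef_nonneg]).
  generalize (IH j) (mcoef_nonneg k j) (pos_INR k) (pos_INR j); rewrite !S_INR in *; intros.
  nra.
Qed.

(* The ratio bound turns the derivative term [(j+1) c_(j+1)] into [(u-2) c_j], leaving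
   room for the [- c_j] term and the constant term of the recursion of [qcoef]. *)
Lemma qcoef_abs_le_mcoef (a : R) (n : nat) :
  b = phi_slope a -> v = 2 * a ^ 2 -> INR n * v <= u ^ 2 - 2 * u ->
  forall k, (k <= n)%nat -> forall j, Rabs (qcoef a k j) <= mcoef b u v k j.
Proof.
  intros Hba Hva HR k; induction k as [| k IH]; intros Hk j.
  { simpl; rewrite Rabs_R0; apply (mcoef_nonneg 0). }
  specialize (IH ltac:(lia)).
  assert (Hjk : INR (S j) * mcoef b u v k (S j) <= (u - 2) * mcoef b u v k j).
  { assert (INR k * v <= INR n * v) by (apply Rmult_le_compat_r; [auto | apply le_INR; lia]).
    generalize (mcoef_ratio k j) (mcoef_nonneg k j); intros; apply Rmult_le_reg_l with u; nra. }
  assert (Hd : Rabs (seq_delta0 ((-1) ^ k * b) j) <= mcoef b u v k j).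
  { destruct j; simpl; [| rewrite Rabs_R0; apply mcoef_nonneg].
    rewrite Rabs_mult, pow_1_abs, Rabs_pos_eq by auto; generalize (mcoef_0_ge k); lra. }
  assert (Hs : Rabs (v * seq_shift (qcoef a k) j) <= v * seq_shift (mcoef b u v k) j).
  { rewrite Rabs_mult, (Rabs_pos_eq v) by auto; apply Rmult_le_compat_l; auto.
    destruct j; simpl; [rewrite Rabs_R0; lra | apply IH]. }
  assert (Hl : Rabs (INR (S j) * qcoef a k (S j)) <= INR (S j) * mcoef b u v k (S j)).
  { rewrite Rabs_mult, Rabs_pos_eq by apply pos_INR.
    apply Rmult_le_compat_l; [apply pos_INR | apply IH]. }
  rewrite qcoef_S, <- Hba, <- Hva.
  change (mcoef b u v (S k) j) with (u * mcoef b u v k j + v * seq_shift (mcoef b u v k) j).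
  unfold Rminus; eapply Rle_trans; [apply Rabs_triang |].
  eapply Rle_trans; [apply Rplus_le_compat_r, Rabs_triang |].
  eapply Rle_trans; [apply Rplus_le_compat_r, Rplus_le_compat_r, Rabs_triang |].
  rewrite !Rabs_Ropp; generalize (IH j); lra.
Qed.

End Majorant.

Lemma qpoly_abs_le (a u : R) (r : nat) (p : R) :
  0 <= a -> 1 <= u -> INR r * (2 * a ^ 2) <= u ^ 2 - 2 * u ->
  Rabs (qpoly a r p) <= phi_slope a * (u + 2 * a ^ 2 * Rabs p) ^ r.
Proof.
  intros Ha Hu HR; unfold qpoly; rewrite <- sum_mcoef_pow.
  eapply Rle_trans; [apply Rsum_abs |].
  apply sum_Rle; intros j _; rewrite Rabs_mult, <- RPow_abs.
  apply Rmult_le_compat_r; [apply pow_le, Rabs_pos |].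
  apply (qcoef_abs_le_mcoef _ _ _ (phi_slope_nonneg a Ha) Hu) with (n := r); auto.
  generalize (pow2_ge_0 a); lra.
Qed.

Lemma phi_slope_le_pow3 (a : R) (r : nat) : 0 <= a -> a ^ 2 <= 8 * INR r -> phi_slope a <= 3 ^ r.
Proof.
  intros Ha Ha2.
  assert (a <= 3 ^ r).
  { assert (a ^ 2 <= (3 ^ r) ^ 2).
    { rewrite <- pow_mult, Nat.mul_comm, pow_mult; replace (3 ^ 2) with (1 + 8) by ring.
      generalize (Rle_pow_lin 8 r ltac:(lra)); lra. }
    generalize (pow_le 3 r ltac:(lra)); nra. }
  assert (1 <= sqrt PI) by (rewrite <- sqrt_1; apply sqrt_le_1_alt; generalize PI2_1; lra).
  apply Rle_trans with a; auto; unfold phi_slope, Rdiv.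
  rewrite <- (Rmult_1_r a) at 2; apply Rmult_le_compat_l; auto.
  rewrite <- Rinv_1; apply Rinv_le_contravar; lra.
Qed.

Lemma qpoly_abs_le_small_eps (eps : R) (r : nat) (p : R) :
  0 < eps <= exp (-2) -> 1 / 2 * ln (/ eps) <= INR r <= ln (/ eps) ->
  Rabs (qpoly (a_eps eps) r p) <= (3 * INR r) ^ r * (6 + 16 * Rabs p) ^ r.
Proof.
  intros He Hr; assert (HL := ln_inv_ge_2 eps He).
  assert (Ha2 := a_eps_sq eps ltac:(lra)); assert (Ha := a_eps_nonneg eps).
  set (a := a_eps eps) in *; set (y := Rabs p); assert (Hy : 0 <= y) by apply Rabs_pos.
  assert (Hslope : phi_slope a <= 3 ^ r) by (apply phi_slope_le_pow3; lra).
  assert (Hr1 : 1 <= INR r) by lra.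
  assert (Hcond : INR r * (2 * a ^ 2) <= (6 * INR r) ^ 2 - 2 * (6 * INR r))
    by (rewrite Ha2; nra).
  eapply Rle_trans; [apply (qpoly_abs_le a (6 * INR r)); auto; lra |]; fold y.
  replace ((3 * INR r) ^ r * (6 + 16 * y) ^ r) with (3 ^ r * (INR r * (6 + 16 * y)) ^ r)
    by (rewrite !Rpow_mult_distr; ring).
  assert (Hay : 2 * a ^ 2 * y <= 16 * INR r * y) by (apply Rmult_le_compat_r; lra).
  assert (0 <= 2 * a ^ 2 * y) by (generalize (pow2_ge_0 a); intros; apply Rmult_le_pos; lra).
  apply Rmult_le_compat; [apply phi_slope_nonneg; auto | apply pow_le; lra | auto |].
  apply pow_incr; split; lra.
Qed.

Lemma exp_neg_weighted_le (p : R) : 0 <= p -> exp (- p) * (1 + p ^ 2) <= 4.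
Proof.
  intros Hp; assert (H1 := exp_ineq1_le (p / 2)).
  assert (exp p = exp (p / 2) * exp (p / 2)) by (rewrite <- exp_plus; f_equal; field).
  assert (exp (- p) * exp p = 1) by (rewrite <- exp_plus, Rplus_opp_l; apply exp_0).
  assert (1 + p ^ 2 <= 4 * exp p) by nra.
  generalize (exp_pos (- p)); nra.
Qed.

Lemma exp_quad_weighted_le (y : R) : exp (- 4 * y ^ 2 + y) * (1 + y ^ 2) <= 2.
Proof.
  apply Rle_trans with (exp (- 4 * y ^ 2 + y) * exp (y ^ 2)).
  { apply Rmult_le_compat_l; [left; apply exp_pos | generalize (exp_ineq1_le (y ^ 2)); lra]. }
  rewrite <- exp_plus; left; apply Rle_lt_trans with (exp (1 / 8)); [| apply exp_one_eighth_lt_2].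
  apply exp_le_compat; generalize (pow2_ge_0 (y - 1 / 6)); nra.
Qed.

Lemma linear_mul_gauss_le (y : R) : (6 + 16 * y) * exp (- 2 * y ^ 2) <= 22.
Proof.
  assert (H1 := exp_ineq1_le (2 * y ^ 2)).
  assert (exp (- 2 * y ^ 2) * exp (2 * y ^ 2) = 1).
  { rewrite <- exp_plus; replace (- 2 * y ^ 2 + 2 * y ^ 2) with 0 by ring; apply exp_0. }
  assert (6 + 16 * y <= 22 * (1 + 2 * y ^ 2)) by nra.
  generalize (exp_pos (- 2 * y ^ 2)); nra.
Qed.

(* Each [r] in [a^2 >= 2 r + 4] buys a factor [exp (- 2 p^2)]; the remaining
   [exp (- 4 p^2 + |p|)] absorbs the weight [1 + p^2]. *)
Lemma gauss_exp_weighted_le (a : R) (r : nat) (p : R) :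
  2 * INR r + 4 <= a ^ 2 -> gauss_exp a p * (1 + p ^ 2) <= 2 * exp (- 2 * p ^ 2) ^ r.
Proof.
  intros Ha; rewrite <- exp_mul_INR.
  assert (Hg : gauss_exp a p <= exp (INR r * (- 2 * p ^ 2)) * exp (- 4 * Rabs p ^ 2 + Rabs p)).
  { unfold gauss_exp; rewrite <- exp_plus, pow2_abs; apply exp_le_compat.
    rewrite Rpow_mult_distr; generalize (pow2_ge_0 p) (Rabs_maj2 p); nra. }
  rewrite pow2_abs in Hg; assert (Hw := exp_quad_weighted_le (Rabs p)); rewrite pow2_abs in Hw.
  assert (Hp := one_plus_sq_pos p).
  apply Rle_trans with (exp (INR r * (- 2 * p ^ 2)) * (exp (- 4 * p ^ 2 + Rabs p) * (1 + p ^ 2))).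
  - rewrite <- Rmult_assoc; apply Rmult_le_compat_r; lra.
  - generalize (exp_pos (INR r * (- 2 * p ^ 2))); intros; nra.
Qed.

Lemma psi_weighted_le (eps p : R) : 0 < eps <= exp (-2) -> psi eps p * (1 + p ^ 2) <= 4.
Proof.
  intros He; assert (Hp2 := one_plus_sq_pos p).
  destruct (Rle_or_lt 0 p) as [Hp | Hp].
  - generalize (proj2 (psi_pos_le_exp_abs eps He p)) (exp_neg_weighted_le p Hp).
    rewrite Rabs_pos_eq by auto; nra.
  - assert (Ha : 2 * INR 0 + 4 <= a_eps eps ^ 2)
      by (rewrite a_eps_sq; generalize (ln_inv_ge_2 eps He); simpl; lra).
    generalize (gauss_exp_weighted_le _ _ p Ha) (psi_le_gauss_exp_of_nonpos eps p (Rlt_le _ _ Hp)).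
    simpl; nra.
Qed.

Lemma dpsi_weighted_le (eps : R) (r : nat) (p : R) :
  0 < eps <= exp (-2) -> 1 / 2 * ln (/ eps) <= INR r <= ln (/ eps) ->
  Rabs (dpsi eps r p) * (1 + p ^ 2) <= 6 * (66 * INR r) ^ r.
Proof.
  intros He Hr; assert (HL := ln_inv_ge_2 eps He); assert (Hr1 : 1 <= INR r) by lra.
  assert (Hp2 := one_plus_sq_pos p); set (a := a_eps eps).
  assert (HQ := qpoly_abs_le_small_eps eps r p He Hr); fold a in HQ.
  assert (HE : gauss_exp a p * (1 + p ^ 2) <= 2 * exp (- 2 * Rabs p ^ 2) ^ r).
  { rewrite pow2_abs; apply gauss_exp_weighted_le; unfold a; rewrite a_eps_sq; lra. }
  assert (Hlin : ((6 + 16 * Rabs p) * exp (- 2 * Rabs p ^ 2)) ^ r <= 22 ^ r).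
  { apply pow_incr; split; [| apply linear_mul_gauss_le].
    generalize (Rabs_pos p) (exp_pos (- 2 * Rabs p ^ 2)); intros; apply Rmult_le_pos; lra. }
  rewrite Rpow_mult_distr in Hlin.
  assert (HQE : Rabs (qpoly a r p) * gauss_exp a p * (1 + p ^ 2) <= 2 * (66 * INR r) ^ r).
  { replace (66 * INR r) with (3 * INR r * 22) by ring; rewrite (Rpow_mult_distr _ 22).
    rewrite Rmult_assoc; eapply Rle_trans.
    { apply Rmult_le_compat; [apply Rabs_pos | | apply HQ | apply HE].
      apply Rmult_le_pos; [left; apply exp_pos | lra]. }
    generalize (pow_le (3 * INR r) r ltac:(lra)); nra. }
  assert (Hpsi := psi_weighted_le eps p He).
  assert (0 < psi eps p) by apply (psi_pos_le_exp_abs eps He p).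
  assert (1 <= (66 * INR r) ^ r) by (apply pow_R1_Rle; lra).
  assert (Rabs (dpsi eps r p) <= psi eps p + Rabs (qpoly a r p) * gauss_exp a p).
  { unfold dpsi; fold a; eapply Rle_trans; [apply Rabs_triang |].
    rewrite !Rabs_mult, pow_1_abs, (Rabs_pos_eq (psi eps p)), (Rabs_pos_eq (gauss_exp a p)) by
      (left; auto; apply exp_pos); lra. }
  nra.
Qed.

(** * Improper integrals and the L2 bound *)

Lemma increasing_bounded_lim_p_infty (G : R -> R) (B : R) :
  (forall x y, x <= y -> G x <= G y) -> (forall x, G x <= B) ->
  exists l, filterlim G (Rbar_locally p_infty) (locally l) /\ (forall x, G x <= l) /\ l <= B.
Proof.
  intros Hmono HB.
  destruct (completeness (fun z => exists x, z = G x)) as [l [Hub Hlub]].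
  { exists B; intros z [x ->]; auto. }
  { exists (G 0); eauto. }
  exists l; split; [| split; [intros x; apply Hub; eauto | apply Hlub; intros z [x ->]; auto]].
  apply filterlim_locally; intros e.
  assert (Hx0 : exists x0, l - e < G x0).
  { apply NNPP; intros Hn.
    assert (Hle : is_upper_bound (fun z => exists x, z = G x) (l - e)).
    { intros z [x ->]; apply Rnot_lt_le; intros Hlt; apply Hn; eauto. }
    specialize (Hlub _ Hle); destruct e; simpl in *; lra. }
  destruct Hx0 as [x0 Hx0]; exists x0; intros x Hx.
  assert (G x0 <= G x) by (apply Hmono; lra); assert (G x <= l) by (apply Hub; eauto).
  change (Rabs (G x - l) < e); apply Rabs_lt_between'; lra.
Qed.

Lemma increasing_bounded_lim_m_infty (G : R -> R) (B : R) :
  (forall x y, x <= y -> G x <= G y) -> (forall x, B <= G x) ->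
  exists l, filterlim G (Rbar_locally m_infty) (locally l) /\ (forall x, l <= G x) /\ B <= l.
Proof.
  intros Hmono HB.
  destruct (increasing_bounded_lim_p_infty (fun x => - G (- x)) (- B)) as [l [Hl [Hub HlB]]].
  { intros x y Hxy; apply Ropp_le_contravar, Hmono; lra. }
  { intros x; apply Ropp_le_contravar, HB. }
  exists (- l); split.
  2: split; [intros x; generalize (Hub (- x)); rewrite Ropp_involutive; lra | lra].
  apply (filterlim_ext (fun x => - (- G (- - x))));
    [intros x; rewrite !Ropp_involutive; reflexivity |].
  apply (filterlim_comp _ _ _ Ropp (fun y => - (- G (- y))) _ (Rbar_locally p_infty));
    [apply (filterlim_Rbar_opp m_infty) |].
  apply (filterlim_comp _ _ _ (fun y => - G (- y)) Ropp _ (locally l)); [apply Hl |].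
  apply (filterlim_opp (V := R_NormedModule)).
Qed.

Section CauchyComparison.

Variables (h : R -> R) (K : R).
Hypotheses (Hh_cont : forall x, continuous h x)
           (Hh_bound : forall x, 0 <= h x <= K / (1 + x ^ 2)).

Lemma RInt_le_atan_sub (x y : R) : x <= y -> 0 <= RInt h x y <= K * (atan y - atan x).
Proof.
  intros Hxy; split.
  { apply RInt_ge_0; [lra | apply ex_RInt_of_continuous, Hh_cont | intros; apply Hh_bound]. }
  rewrite <- (is_RInt_unique _ _ _ _ (is_RInt_inv_one_plus_sq x y)).
  rewrite <- (RInt_scal (V := R_CompleteNormedModule)) by (eexists; apply is_RInt_inv_one_plus_sq).
  apply RInt_le; auto; [apply ex_RInt_of_continuous, Hh_cont | | intros t _; apply Hh_bound].
  apply ex_RInt_of_continuous; intros t; apply continuous_of_ex_derive.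
  apply (ex_derive_ext (fun t => K * / (1 + t ^ 2))); [reflexivity |].
  auto_derive; generalize (one_plus_sq_pos t); lra.
Qed.

Lemma RInt_sub_RInt (x y : R) : RInt h 0 y - RInt h 0 x = RInt h x y.
Proof.
  assert (HC : RInt h 0 x + RInt h x y = RInt h 0 y)
    by exact (RInt_Chasles h 0 x y (ex_RInt_of_continuous _ _ _ Hh_cont)
                (ex_RInt_of_continuous _ _ _ Hh_cont)).
  lra.
Qed.

Lemma RInt_0_abs_le (x : R) : - (K * (PI / 2)) <= RInt h 0 x <= K * (PI / 2).
Proof.
  assert (HK : 0 <= K) by (generalize (Hh_bound 0); simpl; lra).
  assert (H0 : RInt h 0 0 = 0) by apply (RInt_point (V := R_CompleteNormedModule)).
  generalize (atan_bound x); intros; destruct (Rle_or_lt 0 x) as [Hx | Hx].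
  - generalize (RInt_le_atan_sub 0 x Hx) (RInt_sub_RInt 0 x); rewrite H0, atan_0.
    intros; split; nra.
  - generalize (RInt_le_atan_sub x 0 (Rlt_le _ _ Hx)) (RInt_sub_RInt x 0); rewrite H0, atan_0.
    intros; split; nra.
Qed.

(* The antiderivative [RInt h 0] is increasing and bounded, so it has limits at both ends. *)
Lemma is_RInt_gen_cauchy_bound :
  exists I, is_RInt_gen h (Rbar_locally m_infty) (Rbar_locally p_infty) I /\ 0 <= I <= K * PI.
Proof.
  set (G := fun x => RInt h 0 x).
  assert (HG : forall x, is_derive G x (h x)).
  { intros x; apply is_derive_RInt with 0; [| apply Hh_cont].
    apply filter_forall. intros y; apply (RInt_correct (V := R_CompleteNormedModule)).
    apply ex_RInt_of_continuous, Hh_cont. }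
  assert (Hmono : forall x y, x <= y -> G x <= G y).
  { intros x y Hxy; generalize (RInt_le_atan_sub x y Hxy) (RInt_sub_RInt x y); unfold G; lra. }
  destruct (increasing_bounded_lim_p_infty G _ Hmono (fun x => proj2 (RInt_0_abs_le x)))
    as [lp [Hlp [Hlp1 Hlp2]]].
  destruct (increasing_bounded_lim_m_infty G _ Hmono (fun x => proj1 (RInt_0_abs_le x)))
    as [lm [Hlm [Hlm1 Hlm2]]].
  exists (lp - lm); split; [| generalize (Hlp1 0) (Hlm1 0); lra].
  assert (HDG : Derive G = h)
    by (apply functional_extensionality; intros; apply is_derive_unique, HG).
  rewrite <- HDG; apply (is_RInt_gen_Derive G lm lp); auto;
    exists (fun _ => True) (fun _ => True); try (exists 0; now auto); intros x y _ _ t _.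
  - exists (h t); apply HG.
  - rewrite HDG; apply Hh_cont.
Qed.

End CauchyComparison.

(* [Rpower 0 _ = 1] because [ln 0 = 0]; hence the hypothesis [1 <= x]. *)
Lemma Rpower_inv_le (n x : R) (r : nat) :
  (0 < r)%nat -> 0 <= n -> 1 <= x -> n <= x ^ r -> Rpower n (/ INR r) <= x.
Proof.
  intros Hr [Hn | <-] Hx Hnx.
  - assert (0 < INR r) by (apply lt_0_INR; auto).
    apply Rle_trans with (Rpower (x ^ r) (/ INR r)).
    + apply Rle_Rpower_l; [left; apply Rinv_0_lt_compat; auto | lra].
    + rewrite <- Rpower_pow, Rpower_mult, Rinv_r, Rpower_1 by lra; lra.
  - unfold Rpower; replace (ln 0) with 0.
    + rewrite Rmult_0_r, exp_0; auto.
    + unfold ln; destruct (Rlt_dec 0 0); [exfalso; lra | reflexivity].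
Qed.

Lemma sq_le_of_weighted_abs_le (y w M : R) : 1 <= w -> Rabs y * w <= M -> y ^ 2 <= M ^ 2 / w.
Proof.
  intros Hw HyM; rewrite <- pow2_abs.
  apply Rmult_le_reg_r with w; [lra |].
  unfold Rdiv; rewrite Rmult_assoc, Rinv_l, Rmult_1_r by lra.
  assert (0 <= Rabs y * w) by (apply Rmult_le_pos; [apply Rabs_pos | lra]).
  assert ((Rabs y * w) ^ 2 <= M ^ 2) by (apply pow_incr; lra).
  generalize (pow2_ge_0 (Rabs y)); nra.
Qed.

Lemma L2_norm_Derive_n_psi_le (eps : R) (r : nat) :
  0 < eps <= exp (-2) -> 1 / 2 * ln (/ eps) <= INR r <= ln (/ eps) ->
  exists n, L2_norm_is (Derive_n (psi eps) r) n /\ 0 <= n <= (792 * INR r) ^ r.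
Proof.
  intros He Hr; assert (Hr1 : 1 <= INR r) by (generalize (ln_inv_ge_2 eps He); lra).
  set (M := 6 * (66 * INR r) ^ r).
  assert (HM : 1 <= (66 * INR r) ^ r) by (apply pow_R1_Rle; lra).
  rewrite Derive_n_psi.
  destruct (is_RInt_gen_cauchy_bound (fun p => dpsi eps r p ^ 2) (M ^ 2)) as [I [HI [HI0 HIM]]].
  - intros x; apply continuous_of_ex_derive; exists (INR 2 * dpsi eps (S r) x * dpsi eps r x ^ 1).
    apply (is_derive_pow (dpsi eps r) 2 x), is_derive_dpsi.
  - intros x; split; [apply pow2_ge_0 |].
    apply sq_le_of_weighted_abs_le; [generalize (pow2_ge_0 x); lra |].
    apply dpsi_weighted_le; auto.
  - exists (sqrt I); split; [exists I; auto | split; [apply sqrt_pos |]].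
    assert (HsI : sqrt I <= 2 * M).
    { rewrite <- (sqrt_pow2 (2 * M)) by (unfold M; lra); apply sqrt_le_1_alt.
      generalize PI_4; nra. }
    assert (12 <= 12 ^ r).
    { destruct r; [simpl in Hr1; lra | simpl; generalize (pow_R1_Rle 12 r ltac:(lra)); lra]. }
    replace (792 * INR r) with (12 * (66 * INR r)) by ring; rewrite Rpow_mult_distr.
    unfold M in HsI; nra.
Qed.

Theorem theorem4p1 :
  (forall eps : R, 0 < eps <= exp (-2) ->
     (forall p : R, 0 < psi eps p <= exp (- Rabs p))
     /\ (forall p : R, 1 / 2 <= p -> Rabs (psi eps p - exp (- p)) <= eps))
  /\
  (exists C : R, 0 < C /\
     forall eps : R, 0 < eps <= exp (-2) ->
     forall r : nat, 1 / 2 * ln (/ eps) <= INR r <= ln (/ eps) ->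
     exists n : R, L2_norm_is (Derive_n (psi eps) r) n
                   /\ Rpower n (/ INR r) <= C * INR r).
Proof.
  split.
  - intros eps He; split; [apply psi_pos_le_exp_abs | apply psi_sub_exp_abs_le]; auto.
  - exists 792; split; [lra |]; intros eps He r Hr.
    assert (Hr1 : 1 <= INR r) by (generalize (ln_inv_ge_2 eps He); lra).
    destruct (L2_norm_Derive_n_psi_le eps r He Hr) as [n [Hn [Hn0 Hnr]]].
    exists n; split; auto.
    apply Rpower_inv_le; auto; [| lra].
    destruct r; [simpl in Hr1; lra | lia].
Qed.
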